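(* Fix a constant $c>0$. Then \[ \lim_{\ell\to\infty}2^{-\ell}\sum_{j=1}^{\ell}\binom{\ell}{j}\frac{1}{1-\left(1-\frac{2c}{\ell}\right)^j}=\frac{1}{1-e^{-c}}. \]
   Context: The sum is over integers $j$; the limit is over integers $\ell\to\infty$ (for $\ell>c$ all denominators are nonzero). In view of the preceding hitting-time formula, $2^\ell$ times this quantity is the expected time for the bitwise-mutation random walk with rate $c/\ell$ (equivalently, the (1+1) EA with mutation rate $c/\ell$ on the Needle function of length $\ell$) started uniformly to hit the all-ones string. *)

From Stdlib Require Import Reals.
From Coquelicot Require Import Coquelicot.
Open Scope R_scope.

(* For finitely many small l (l <= c) a denominator may vanish; Stdlib's
   total division assigns some value there, which does not affect the limit. *)
Definition needle_seq (c : R) (l : nat) : R :=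
  / 2 ^ l * sum_f 1 l (fun j => Binomial.C l j / (1 - (1 - 2 * c / INR l) ^ j)).

From Stdlib Require Import Reals Lra Lia.
From Coquelicot Require Import Coquelicot.
Open Scope R_scope.

(* Write [q = q_l = 1 - 2c/l]; then [needle_seq c l = 2^{-l} sum_{j=1}^l C(l,j)/(1 - q^j)].
   Expanding [1/(1-x) = sum_{k<K} x^k + x^K/(1-x)] at [x = q^j] and summing against the
   binomial weights splits the sequence into
   - finitely many "moments" [2^{-l} sum_j C(l,j) q^(jk) = ((1 + q^k)/2)^l - 2^{-l}],
     each tending to [e^{-ck}] by the compound-interest limit [u_n^n -> e^{-a}] when
     [n (1 - u_n) -> a];
   - a nonnegative remainder which, using [1 - q^j >= j (1-q) q^(j-1)] and the binomial
     absorption identity, is at most [2/(c q^M) ((1 + q^M)/2)^l -> (2/c) e^{-cM}] for [K = M+1].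
   A general [eps/4] lemma ([is_lim_seq_approx]) then lets [l -> oo] and [M -> oo] to give
   [sum_k e^{-ck} = 1/(1 - e^{-c})]. *)

(* The two logarithm bounds [1 - 1/x <= ln x <= x - 1] used to squeeze
   [n ln u_n] between multiples of [n (1 - u_n)]. *)
Lemma ln_le_sub_1 x : 0 < x -> ln x <= x - 1.
Proof.
  intros Hx. rewrite <- (ln_exp (x - 1)).
  apply ln_le; [exact Hx|]. pose proof (exp_ineq1_le (x - 1)); lra.
Qed.

Lemma one_sub_inv_le_ln x : 0 < x -> 1 - / x <= ln x.
Proof.
  intros Hx. pose proof (ln_le_sub_1 (/ x) (Rinv_0_lt_compat _ Hx)) as H.
  rewrite ln_Rinv in H; lra.
Qed.

Lemma is_lim_seq_inv_INR : is_lim_seq (fun n => / INR n) 0.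
Proof.
  change (Finite 0) with (Rbar_inv p_infty).
  apply is_lim_seq_inv; [apply is_lim_seq_INR | discriminate].
Qed.

Lemma is_lim_seq_pow (u : nat -> R) (l : R) (k : nat) :
  is_lim_seq u l -> is_lim_seq (fun n => u n ^ k) (l ^ k).
Proof.
  intros Hu. induction k as [|k IH]; simpl.
  - apply is_lim_seq_const.
  - apply is_lim_seq_mult'; assumption.
Qed.

Lemma is_lim_seq_one_of_defect (u : nat -> R) (a : R) :
  is_lim_seq (fun n => INR n * (1 - u n)) a -> is_lim_seq u 1.
Proof.
  intros Hw.
  apply is_lim_seq_ext_loc with (fun n => 1 - INR n * (1 - u n) * / INR n).
  - exists 1%nat. intros n Hn. assert (INR n <> 0) by (apply not_0_INR; lia).
    field; assumption.
  - replace (Finite 1) with (Finite (1 - a * 0)) by (f_equal; ring).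
    apply is_lim_seq_minus'; [apply is_lim_seq_const|].
    apply is_lim_seq_mult'; [exact Hw | exact is_lim_seq_inv_INR].
Qed.

(* The compound-interest limit: [n (1 - u_n) -> a] implies [u_n ^ n -> e^{-a}].
   Proof: [n ln u_n] is squeezed between [-n (1 - u_n) / u_n] and [-n (1 - u_n)]. *)
Lemma is_lim_seq_pow_n (u : nat -> R) (a : R) :
  eventually (fun n => 0 < u n) ->
  is_lim_seq (fun n => INR n * (1 - u n)) a ->
  is_lim_seq (fun n => u n ^ n) (exp (- a)).
Proof.
  intros Hpos Hw.
  pose proof (is_lim_seq_one_of_defect u a Hw) as Hu.
  pose proof (proj1 (is_lim_seq_opp _ (Finite a)) Hw) as Hw'; simpl in Hw'.
  assert (Hlog : is_lim_seq (fun n => INR n * ln (u n)) (- a)).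
  { apply is_lim_seq_le_le_loc with
      (u := fun n => - (INR n * (1 - u n)) / u n) (w := fun n => - (INR n * (1 - u n))).
    - destruct Hpos as [N HN]. exists N. intros n Hn. specialize (HN n Hn).
      pose proof (pos_INR n). pose proof (ln_le_sub_1 _ HN). pose proof (one_sub_inv_le_ln _ HN).
      split.
      + replace (- (INR n * (1 - u n)) / u n) with (INR n * (1 - / u n)) by (field; lra).
        apply Rmult_le_compat_l; lra.
      + replace (- (INR n * (1 - u n))) with (INR n * (u n - 1)) by ring.
        apply Rmult_le_compat_l; lra.
    - replace (- a) with (- a / 1) by field.
      apply is_lim_seq_div'; [exact Hw' | exact Hu | lra].
    - exact Hw'. }
  apply is_lim_seq_ext_loc with (fun n => exp (INR n * ln (u n))).
  - destruct Hpos as [N HN]. exists N. intros n Hn. specialize (HN n Hn).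
    rewrite <- ln_pow by exact HN. rewrite exp_ln by (apply pow_lt; exact HN). reflexivity.
  - apply (is_lim_seq_continuous exp); [|exact Hlog].
    apply derivable_continuous_pt, derivable_pt_exp.
Qed.

Fixpoint geom_sum (k : nat) (x : R) : R :=
  match k with O => 0 | S k => 1 + x * geom_sum k x end.

Lemma one_sub_pow_factor k x : 1 - x ^ k = (1 - x) * geom_sum k x.
Proof. induction k as [|k IH]; simpl; [ring | nra]. Qed.

Lemma is_lim_seq_geom_sum k (v : nat -> R) :
  is_lim_seq v 1 -> is_lim_seq (fun n => geom_sum k (v n)) (INR k).
Proof.
  intros Hv. induction k as [|k IH]; cbn [geom_sum].
  - apply is_lim_seq_const.
  - replace (Finite (INR (S k))) with (Finite (1 + 1 * INR k)) by (f_equal; rewrite S_INR; ring).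
    apply is_lim_seq_plus'; [apply is_lim_seq_const | apply is_lim_seq_mult'; assumption].
Qed.

(* Each of the [k + 1] terms of [geom_sum (S k) q] is at least [q ^ k]. *)
Lemma geom_sum_ge k q : 0 <= q <= 1 -> INR (S k) * q ^ k <= geom_sum (S k) q.
Proof.
  intros Hq. induction k as [|k IH].
  - simpl. lra.
  - change (geom_sum (S (S k)) q) with (1 + q * geom_sum (S k) q).
    rewrite S_INR. simpl pow.
    assert (q ^ k <= 1) by (rewrite <- (pow1 k); apply pow_incr; lra).
    assert (0 <= q ^ k) by (apply pow_le; lra).
    nra.
Qed.

Lemma pow_ratio_le q j : 0 < q < 1 -> (1 <= j)%nat ->
  q ^ j / (1 - q ^ j) <= / (INR j * (1 - q)).
Proof.
  intros Hq Hj. destruct j as [|k]; [lia|].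
  pose proof (geom_sum_ge k q ltac:(lra)) as Hg.
  assert (Hqk : 0 < q ^ k) by (apply pow_lt; lra).
  assert (Hj0 : 0 < INR (S k)) by (apply lt_0_INR; lia).
  assert (Hlow : INR (S k) * (1 - q) * q ^ k <= 1 - q ^ S k).
  { rewrite one_sub_pow_factor. nra. }
  assert (Hden : 0 < INR (S k) * (1 - q) * q ^ k) by (repeat apply Rmult_lt_0_compat; lra).
  apply Rle_trans with (q ^ S k / (INR (S k) * (1 - q) * q ^ k)).
  - apply Rmult_le_compat_l; [left; apply pow_lt; lra|].
    apply Rinv_le_contravar; assumption.
  - rewrite <- tech_pow_Rmult.
    replace (q * q ^ k / (INR (S k) * (1 - q) * q ^ k)) with (q * / (INR (S k) * (1 - q)))
      by (field; repeat split; lra).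
    assert (0 < / (INR (S k) * (1 - q))) by (apply Rinv_0_lt_compat, Rmult_lt_0_compat; lra).
    nra.
Qed.

Lemma binom_nonneg n k : 0 <= Binomial.C n k.
Proof.
  unfold Binomial.C. apply Rmult_le_pos; [left; apply INR_fact_lt_0|].
  left; apply Rinv_0_lt_compat, Rmult_lt_0_compat; apply INR_fact_lt_0.
Qed.

Lemma binom_absorb l j : (j <= l)%nat ->
  Binomial.C (S l) (S j) = INR (S l) / INR (S j) * Binomial.C l j.
Proof.
  intros H. unfold Binomial.C. replace (S l - S j)%nat with (l - j)%nat by lia.
  change (Factorial.fact (S l)) with (S l * Factorial.fact l)%nat.
  change (Factorial.fact (S j)) with (S j * Factorial.fact j)%nat.
  rewrite !mult_INR.
  pose proof (INR_fact_neq_0 l). pose proof (INR_fact_neq_0 j). pose proof (INR_fact_neq_0 (l - j)).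
  assert (INR (S j) <> 0) by (apply not_0_INR; lia).
  field. repeat split; assumption.
Qed.

Lemma binom_div_le l j : (1 <= j <= l)%nat ->
  Binomial.C l j / INR j <= 2 / INR l * Binomial.C (S l) (S j).
Proof.
  intros Hj. rewrite binom_absorb by lia. rewrite !S_INR.
  pose proof (binom_nonneg l j) as HC.
  assert (1 <= INR j) by (replace 1 with (INR 1) by reflexivity; apply le_INR; lia).
  assert (INR j <= INR l) by (apply le_INR; lia).
  assert (Hr : / INR j <= 2 / INR l * ((INR l + 1) / (INR j + 1))).
  { apply (Rmult_le_reg_r (INR j * INR l * (INR j + 1))); [nra|].
    replace (/ INR j * (INR j * INR l * (INR j + 1))) with (INR l * (INR j + 1)) by (field; lra).
    replace (2 / INR l * ((INR l + 1) / (INR j + 1)) * (INR j * INR l * (INR j + 1)))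
      with (2 * (INR l + 1) * INR j) by (field; lra).
    nra. }
  replace (2 / INR l * ((INR l + 1) / (INR j + 1) * Binomial.C l j))
    with (Binomial.C l j * (2 / INR l * ((INR l + 1) / (INR j + 1)))) by ring.
  apply Rmult_le_compat_l; assumption.
Qed.

Lemma binom_sum_from_1 x l : (1 <= l)%nat ->
  sum_f 1 l (fun j => Binomial.C l j * x ^ j) = (1 + x) ^ l - 1.
Proof.
  intros Hl. unfold sum_f. rewrite Rplus_comm, (binomial x 1 l).
  rewrite (decomp_sum _ l) by lia. rewrite C_n_0, pow_O, pow1.
  replace (Nat.pred l) with (l - 1)%nat by lia.
  enough (E : sum_f_R0 (fun k => Binomial.C l (k + 1) * x ^ (k + 1)) (l - 1)
            = sum_f_R0 (fun i => Binomial.C l (S i) * x ^ S i * 1 ^ (l - S i)) (l - 1))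
    by (rewrite E; ring).
  apply sum_eq. intros i Hi. rewrite pow1, Nat.add_1_r. ring.
Qed.

Lemma binom_shift_sum_le y l : 0 < y -> (1 <= l)%nat ->
  sum_f 1 l (fun j => Binomial.C (S l) (S j) * y ^ j) <= (1 + y) ^ S l / y.
Proof.
  intros Hy Hl.
  pose proof (binom_sum_from_1 y (S l) ltac:(lia)) as HB. unfold sum_f in HB |- *.
  replace (S l - 1)%nat with l in HB by lia.
  rewrite (decomp_sum _ l) in HB by lia.
  replace (Nat.pred l) with (l - 1)%nat in HB by lia.
  assert (E : y * sum_f_R0 (fun k => Binomial.C (S l) (S (k + 1)) * y ^ (k + 1)) (l - 1)
            = sum_f_R0 (fun i => Binomial.C (S l) (S i + 1) * y ^ (S i + 1)) (l - 1)).
  { rewrite scal_sum. apply sum_eq. intros i Hi.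
    replace (S i + 1)%nat with (S (i + 1)) by lia. simpl pow. ring. }
  pose proof (binom_nonneg (S l) (0 + 1)).
  assert (0 <= y ^ (0 + 1)) by (apply pow_le; lra).
  apply (Rmult_le_reg_l y); [exact Hy|]. rewrite E.
  replace (y * ((1 + y) ^ S l / y)) with ((1 + y) ^ S l) by (field; lra).
  nra.
Qed.

Lemma is_lim_seq_approx (a : nat -> R) (s r b : nat -> nat -> R) (S B : nat -> R) (L : R) :
  (forall M, eventually (fun l => a l = s M l + r M l /\ 0 <= r M l <= b M l)) ->
  (forall M, is_lim_seq (s M) (S M)) ->
  (forall M, is_lim_seq (b M) (B M)) ->
  is_lim_seq S L -> is_lim_seq B 0 ->
  is_lim_seq a L.
Proof.
  intros Hsplit Hs Hb HS HB. apply is_lim_seq_spec. intros eps.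
  assert (He : 0 < eps / 4) by (pose proof (cond_pos eps); lra).
  set (e := mkposreal _ He).
  destruct (filter_and _ _ (proj2 (is_lim_seq_spec _ _) HS e) (proj2 (is_lim_seq_spec _ _) HB e))
    as [N HN].
  destruct (HN N (le_n N)) as [HSM HBM]; simpl in HSM, HBM.
  pose proof (filter_and _ _ (Hsplit N)
    (filter_and _ _ (proj2 (is_lim_seq_spec _ _) (Hs N) e)
                    (proj2 (is_lim_seq_spec _ _) (Hb N) e))) as Hl.
  eapply filter_imp; [|exact Hl]. simpl.
  intros l [[Ha Hr] [Hsl Hbl]].
  rewrite Ha. apply Rabs_def2 in HSM, HBM, Hsl, Hbl. apply Rabs_def1; lra.
Qed.

(* For a ratio [q] and length [l]: the binomial moments
   [moment q l k = 2^{-l} sum_{j=1}^l C(l,j) q^(jk)], the remainder of the geometric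
   expansion of [1/(1 - q^j)] after [K] terms, and the truncated expansion
   [partial q l K = sum_{k<K} moment q l k]. *)
Definition moment (q : R) (l k : nat) : R :=
  / 2 ^ l * sum_f 1 l (fun j => Binomial.C l j * (q ^ j) ^ k).

Definition remainder (q : R) (l K : nat) : R :=
  / 2 ^ l * sum_f 1 l (fun j => Binomial.C l j * (q ^ j) ^ K / (1 - q ^ j)).

Fixpoint partial (q : R) (l K : nat) : R :=
  match K with O => 0 | S K => partial q l K + moment q l K end.

Lemma moment_closed_form q l k : (1 <= l)%nat ->
  moment q l k = ((1 + q ^ k) / 2) ^ l - / 2 ^ l.
Proof.
  intros Hl. unfold moment.
  replace (sum_f 1 l (fun j => Binomial.C l j * (q ^ j) ^ k))
    with (sum_f 1 l (fun j => Binomial.C l j * (q ^ k) ^ j)).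
  - rewrite binom_sum_from_1 by exact Hl.
    unfold Rdiv. rewrite Rpow_mult_distr, pow_inv. ring.
  - unfold sum_f. apply sum_eq. intros i _. rewrite <- !pow_mult, Nat.mul_comm. reflexivity.
Qed.

(* Geometric expansion [x^K/(1-x) = x^K + x^(K+1)/(1-x)], summed against the binomial weights. *)
Lemma remainder_step q l K : 0 < q < 1 ->
  remainder q l K = moment q l K + remainder q l (S K).
Proof.
  intros Hq. unfold remainder, moment. rewrite <- Rmult_plus_distr_l. f_equal.
  unfold sum_f. rewrite <- sum_plus. apply sum_eq. intros i _.
  assert (q ^ (i + 1) < 1) by (apply pow_lt_1_compat; [lra | lia]).
  change ((q ^ (i + 1)) ^ S K) with (q ^ (i + 1) * (q ^ (i + 1)) ^ K).
  field. lra.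
Qed.

Lemma remainder_split q l K : 0 < q < 1 ->
  remainder q l 0 = partial q l K + remainder q l K.
Proof.
  intros Hq. induction K as [|K IH]; cbn [partial].
  - ring.
  - rewrite IH, (remainder_step q l K Hq). ring.
Qed.

Lemma remainder_nonneg q l K : 0 < q < 1 -> 0 <= remainder q l K.
Proof.
  intros Hq. unfold remainder. apply Rmult_le_pos.
  - left; apply Rinv_0_lt_compat, pow_lt; lra.
  - unfold sum_f. apply cond_pos_sum. intros i.
    assert (q ^ (i + 1) < 1) by (apply pow_lt_1_compat; [lra | lia]).
    apply Rdiv_le_0_compat; [|lra].
    apply Rmult_le_pos; [apply binom_nonneg | apply pow_le, pow_le; lra].
Qed.

(* Termwise bound on the remainder: [q^j/(1-q^j) <= 1/(j (1-q))] and
   [C(l,j)/j <= (2/l) C(l+1,j+1)] give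
   [C(l,j) q^(j(M+1))/(1-q^j) <= 2/(l(1-q)) C(l+1,j+1) (q^M)^j]. *)
Lemma remainder_term_le q l M j : 0 < q < 1 -> (1 <= j <= l)%nat ->
  Binomial.C l j * (q ^ j) ^ S M / (1 - q ^ j)
  <= 2 / (INR l * (1 - q)) * (Binomial.C (S l) (S j) * (q ^ M) ^ j).
Proof.
  intros Hq Hj.
  pose proof (pow_ratio_le q j Hq ltac:(lia)) as Hratio.
  pose proof (binom_div_le l j Hj) as Hbinom.
  assert (0 < INR j) by (apply lt_0_INR; lia).
  assert (0 < INR l) by (apply lt_0_INR; lia).
  assert (q ^ j < 1) by (apply pow_lt_1_compat; [lra | lia]).
  assert (0 <= (q ^ M) ^ j) by (apply pow_le, pow_le; lra).
  pose proof (binom_nonneg l j).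
  replace (Binomial.C l j * (q ^ j) ^ S M / (1 - q ^ j))
    with (Binomial.C l j * (q ^ M) ^ j * (q ^ j / (1 - q ^ j)))
    by (rewrite <- tech_pow_Rmult, <- !pow_mult, Nat.mul_comm; field; lra).
  apply Rle_trans with (Binomial.C l j * (q ^ M) ^ j * / (INR j * (1 - q))).
  - apply Rmult_le_compat_l; [apply Rmult_le_pos|]; assumption.
  - replace (Binomial.C l j * (q ^ M) ^ j * / (INR j * (1 - q)))
      with (Binomial.C l j / INR j * ((q ^ M) ^ j / (1 - q))) by (field; lra).
    replace (2 / (INR l * (1 - q)) * (Binomial.C (S l) (S j) * (q ^ M) ^ j))
      with (2 / INR l * Binomial.C (S l) (S j) * ((q ^ M) ^ j / (1 - q))) by (field; lra).
    apply Rmult_le_compat_r; [apply Rdiv_le_0_compat; lra | exact Hbinom].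
Qed.

(* Summing [remainder_term_le] with [binom_shift_sum_le] bounds the remainder by a
   half-power [((1 + q^M)/2)^l], which stays small for [l (1-q)] bounded away from 0. *)
Lemma remainder_le q l M : 0 < q < 1 -> (1 <= l)%nat ->
  remainder q l (S M) <= 4 / (INR l * (1 - q) * q ^ M) * ((1 + q ^ M) / 2) ^ l.
Proof.
  intros Hq Hl. unfold remainder.
  set (y := q ^ M). set (k := 2 / (INR l * (1 - q))).
  assert (Hy : 0 < y) by (apply pow_lt; lra).
  assert (Hy1 : y <= 1) by (rewrite <- (pow1 M); apply pow_incr; lra).
  assert (Hlpos : 0 < INR l) by (apply lt_0_INR; lia).
  assert (Hk : 0 < k) by (apply Rdiv_lt_0_compat; [lra | apply Rmult_lt_0_compat; lra]).
  assert (H2l : 0 < / 2 ^ l) by (apply Rinv_0_lt_compat, pow_lt; lra).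
  assert (Hsum : sum_f 1 l (fun j => Binomial.C l j * (q ^ j) ^ S M / (1 - q ^ j))
                 <= k * ((1 + y) ^ S l / y)).
  { apply Rle_trans with (k * sum_f 1 l (fun j => Binomial.C (S l) (S j) * y ^ j)).
    - unfold sum_f. rewrite scal_sum. apply sum_Rle. intros i Hi.
      rewrite (Rmult_comm _ k). apply remainder_term_le; [exact Hq | lia].
    - apply Rmult_le_compat_l; [lra | exact (binom_shift_sum_le y l Hy Hl)]. }
  assert (Hhalf : ((1 + y) / 2) ^ S l <= ((1 + y) / 2) ^ l).
  { simpl pow. assert (0 <= ((1 + y) / 2) ^ l) by (apply pow_le; lra). nra. }
  apply Rle_trans with (/ 2 ^ l * (k * ((1 + y) ^ S l / y))).
  - apply Rmult_le_compat_l; [lra | exact Hsum].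
  - replace (/ 2 ^ l * (k * ((1 + y) ^ S l / y)))
      with (4 / (INR l * (1 - q) * y) * ((1 + y) / 2) ^ S l).
    + apply Rmult_le_compat_l; [|exact Hhalf].
      apply Rdiv_le_0_compat; [lra | repeat apply Rmult_lt_0_compat; lra].
    + unfold k, Rdiv. rewrite Rpow_mult_distr, pow_inv. simpl pow. field.
      repeat split; try lra. apply pow_nonzero; lra.
Qed.

Definition needle_q (c : R) (l : nat) : R := 1 - 2 * c / INR l.

Lemma needle_seq_eq c l : needle_seq c l = remainder (needle_q c l) l 0.
Proof.
  unfold needle_seq, remainder, needle_q. f_equal.
  unfold sum_f. apply sum_eq. intros i _. rewrite pow_O, Rmult_1_r. reflexivity.
Qed.

Lemma needle_q_defect c l : (1 <= l)%nat -> INR l * (1 - needle_q c l) = 2 * c.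
Proof.
  intros Hl. assert (INR l <> 0) by (apply not_0_INR; lia).
  unfold needle_q. field. assumption.
Qed.

Lemma needle_q_lim c : is_lim_seq (needle_q c) 1.
Proof.
  unfold needle_q. replace (Finite 1) with (Finite (1 - 2 * c * 0)) by (f_equal; ring).
  apply is_lim_seq_minus'; [apply is_lim_seq_const|].
  apply is_lim_seq_mult'; [apply is_lim_seq_const | exact is_lim_seq_inv_INR].
Qed.

Lemma needle_q_eventually c : 0 < c ->
  eventually (fun l => (1 <= l)%nat /\ 0 < needle_q c l < 1).
Proof.
  intros Hc. destruct (proj2 (is_lim_seq_spec _ _) is_lim_seq_INR (2 * c)) as [N HN].
  exists N. intros l Hl. specialize (HN l Hl).
  assert (Hl1 : (1 <= l)%nat) by (destruct l; simpl in HN; [lra | lia]).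
  split; [exact Hl1|]. unfold needle_q.
  assert (0 < 2 * c / INR l) by (apply Rdiv_lt_0_compat; lra).
  assert (2 * c / INR l < 1) by (apply (Rmult_lt_reg_r (INR l)); [lra|]; field_simplify; lra).
  lra.
Qed.

(* [((1 + q_l^k)/2)^l -> e^{-ck}]: here [l (1 - (1 + q_l^k)/2) = c (1 + q_l + ... + q_l^(k-1))
   -> c k], and [is_lim_seq_pow_n] applies. *)
Lemma half_power_lim c k : 0 < c ->
  is_lim_seq (fun l => ((1 + needle_q c l ^ k) / 2) ^ l) (exp (- c) ^ k).
Proof.
  intros Hc.
  assert (Hexp : exp (- (c * INR k)) = exp (- c) ^ k).
  { induction k as [|k IH]; [simpl; rewrite Rmult_0_r, Ropp_0, exp_0; reflexivity|].
    rewrite S_INR, <- tech_pow_Rmult, <- IH, <- exp_plus. f_equal. ring. }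
  rewrite <- Hexp. apply is_lim_seq_pow_n.
  - eapply filter_imp; [|exact (needle_q_eventually c Hc)]. intros l [_ Hq].
    pose proof (pow_lt _ k (proj1 Hq)). lra.
  - apply is_lim_seq_ext_loc with (fun l => c * geom_sum k (needle_q c l)).
    + eapply filter_imp; [|exact (needle_q_eventually c Hc)]. intros l [Hl _].
      replace (1 - (1 + needle_q c l ^ k) / 2) with ((1 - needle_q c l ^ k) / 2) by field.
      rewrite one_sub_pow_factor.
      pose proof (needle_q_defect c l Hl) as Hd. unfold Rdiv. nra.
    + apply is_lim_seq_mult'; [apply is_lim_seq_const|].
      apply is_lim_seq_geom_sum, needle_q_lim.
Qed.

Lemma partial_lim c K : 0 < c ->
  is_lim_seq (fun l => partial (needle_q c l) l K) ((1 - exp (- c) ^ K) / (1 - exp (- c))).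
Proof.
  intros Hc. assert (exp (- c) < 1) by (rewrite <- exp_0; apply exp_increasing; lra).
  assert (Hinv : is_lim_seq (fun l => / 2 ^ l) 0).
  { apply is_lim_seq_ext with (fun l => (/ 2) ^ l); [intros; apply pow_inv|].
    apply is_lim_seq_geom. rewrite Rabs_pos_eq; lra. }
  induction K as [|K IH]; cbn [partial].
  - replace (Finite ((1 - exp (- c) ^ 0) / (1 - exp (- c)))) with (Finite 0)
      by (f_equal; simpl; field; lra).
    apply is_lim_seq_const.
  - replace (Finite ((1 - exp (- c) ^ S K) / (1 - exp (- c))))
      with (Finite ((1 - exp (- c) ^ K) / (1 - exp (- c)) + (exp (- c) ^ K - 0)))
      by (f_equal; rewrite <- tech_pow_Rmult; field; lra).
    apply is_lim_seq_plus'; [exact IH|].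
    apply is_lim_seq_ext_loc with (fun l => ((1 + needle_q c l ^ K) / 2) ^ l - / 2 ^ l).
    + eapply filter_imp; [|exact (needle_q_eventually c Hc)]. intros l [Hl _].
      symmetry. apply moment_closed_form, Hl.
    + apply is_lim_seq_minus'; [apply half_power_lim, Hc | exact Hinv].
Qed.

Lemma remainder_bound_lim c M : 0 < c ->
  is_lim_seq (fun l => 2 / (c * needle_q c l ^ M) * ((1 + needle_q c l ^ M) / 2) ^ l)
    (2 / c * exp (- c) ^ M).
Proof.
  intros Hc. apply is_lim_seq_mult'; [|apply half_power_lim, Hc].
  replace (2 / c) with (2 / (c * 1 ^ M)) by (rewrite pow1; field; lra).
  apply is_lim_seq_div'; [apply is_lim_seq_const| |rewrite pow1; lra].
  apply is_lim_seq_mult'; [apply is_lim_seq_const|].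
  apply is_lim_seq_pow, needle_q_lim.
Qed.

Lemma needle_seq_split c M : 0 < c ->
  eventually (fun l =>
    needle_seq c l = partial (needle_q c l) l (S M) + remainder (needle_q c l) l (S M) /\
    0 <= remainder (needle_q c l) l (S M)
      <= 2 / (c * needle_q c l ^ M) * ((1 + needle_q c l ^ M) / 2) ^ l).
Proof.
  intros Hc. eapply filter_imp; [|exact (needle_q_eventually c Hc)]. intros l [Hl Hq].
  split; [rewrite needle_seq_eq; apply remainder_split, Hq|].
  split; [apply remainder_nonneg, Hq|].
  pose proof (remainder_le _ l M Hq Hl) as Hle.
  rewrite (needle_q_defect c l Hl) in Hle.
  assert (0 < needle_q c l ^ M) by (apply pow_lt; lra).
  replace (2 / (c * needle_q c l ^ M)) with (4 / (2 * c * needle_q c l ^ M)) by (field; lra).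
  exact Hle.
Qed.

Theorem mainTheorem4 (c : R) (hc : 0 < c) :
  is_lim_seq (needle_seq c) (1 / (1 - exp (- c))).
Proof.
  set (r := exp (- c)).
  assert (Hr : 0 < r < 1).
  { split; [apply exp_pos | unfold r; rewrite <- exp_0; apply exp_increasing; lra]. }
  assert (Hgeom : is_lim_seq (fun M => r ^ M) 0).
  { apply is_lim_seq_geom. rewrite Rabs_pos_eq; lra. }
  apply (is_lim_seq_approx _
    (fun M l => partial (needle_q c l) l (S M))
    (fun M l => remainder (needle_q c l) l (S M))
    (fun M l => 2 / (c * needle_q c l ^ M) * ((1 + needle_q c l ^ M) / 2) ^ l)
    (fun M => (1 - r ^ S M) / (1 - r)) (fun M => 2 / c * r ^ M)).
  - intros M. exact (needle_seq_split c M hc).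
  - intros M. exact (partial_lim c (S M) hc).
  - intros M. exact (remainder_bound_lim c M hc).
  -
    replace (Finite (1 / (1 - r))) with (Finite ((1 - 0) / (1 - r)))
      by (rewrite Rminus_0_r; reflexivity).
    apply is_lim_seq_div'; [|apply is_lim_seq_const|lra].
    apply is_lim_seq_minus'; [apply is_lim_seq_const|].
    exact (proj1 (is_lim_seq_incr_1 _ 0) Hgeom).
  -
    replace (Finite 0) with (Finite (2 / c * 0)) by (f_equal; ring).
    apply is_lim_seq_mult'; [apply is_lim_seq_const | exact Hgeom].
Qed.
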